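(* Let $\Gamma$ be a 3-colex, $c\in\{r,b,g,y\}$, and let $s$ be the syndrome of an $X$-error on the 3D color code on $\Gamma$. Let $\pi_c(s)$ be the restriction of $s$ to the edges of $\Gamma^{*\setminus c}$. Then $\pi_c(s)$ is a valid syndrome for an $X$-error on the 3D toric code on $\Gamma^{*\setminus c}$, i.e. there exists an $X$-error on the faces of $\Gamma^{*\setminus c}$ whose toric-code syndrome is $\pi_c(s)$.
   Context: Colors are $\{r,b,g,y\}$. A 3-colex $\Gamma$ is a 3-dimensional cell complex without boundary in which every vertex is 4-valent and lies in exactly four 3-cells, and whose 3-cells are properly 4-colored: every face lies in exactly two 3-cells, which have different colors. The dual complex $\Gamma^*$ has an $i$-cell for every $(3-i)$-cell of $\Gamma$, with incidences reversed; every 3-cell of $\Gamma^*$ is a tetrahedron. A vertex of $\Gamma^*$ is given the color of the corresponding 3-cell of $\Gamma$, so the four vertices of each tetrahedron have distinct colors. A face of $\Gamma^*$ is a $c$-face if none of its vertices has color $c$. The 3D color code on $\Gamma$ has one qubit per tetrahedron $\nu$ of $\Gamma^*$, $X$-stabilizer generators $\prod_{\nu\ni v}X_\nu$ for vertices $v$ and $Z$-stabilizer generators $\prod_{\nu\supset e}Z_\nu$ for edges $e$ of $\Gamma^*$. The syndrome of an $X$-error $\prod_{\nu\in\Omega}X_\nu$ is the function on edges $s_e=|\{\nu\in\Omega:e\subset\nu\}|\bmod 2$. The minor complex $\Gamma^{*\setminus c}$ is obtained from $\Gamma^*$ by deleting all vertices of color $c$ together with all edges and faces incident to them (its faces are the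 $c$-faces of $\Gamma^*$). The 3D toric code on $\Gamma^{*\setminus c}$ has qubits on faces and $Z$-checks $\prod_{f\supset e}Z_f$ on edges; the syndrome of an $X$-error on faces is, at each edge $e$, the parity of the number of error faces containing $e$. *)

From HB Require Import structures.
From mathcomp Require Import all_boot.
Set Implicit Arguments. Unset Strict Implicit. Unset Printing Implicit Defensive.

Inductive color := cr | cb | cg | cy.

Definition color_to_ord (c : color) : 'I_4 :=
  match c with cr => inord 0 | cb => inord 1 | cg => inord 2 | cy => inord 3 end.
Definition ord_to_color (i : 'I_4) : color :=
  match val i with 0 => cr | 1 => cb | 2 => cg | _ => cy end.
Lemma color_toK : cancel color_to_ord ord_to_color.
Proof. by case; rewrite /ord_to_color /= inordK. Qed.
HB.instance Definition _ := Finite.copy color (can_type color_toK).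

(* The dual complex Gamma^*, given by its cells of each dimension and the
   cell incidences (covering relations of its face poset):
   v_in_e v e : vertex v is a vertex of edge e;
   e_in_f e f : edge e lies on the boundary of face f;
   f_in_t f t : face f lies on the boundary of the 3-cell t.
   vcol v is the color of the 3-cell of Gamma dual to v. *)
Record dual_complex := DualComplex {
  vtx : finType; edg : finType; fac : finType; tet : finType;
  vcol : vtx -> color;
  v_in_e : vtx -> edg -> bool;
  e_in_f : edg -> fac -> bool;
  f_in_t : fac -> tet -> bool
}.

Section Cells.
Variable D : dual_complex.

Definition e_in_t (e : edg D) (t : tet D) : bool :=
  [exists f, e_in_f e f && f_in_t f t].

Definition verts_e (e : edg D) : {set vtx D} := [set v | v_in_e v e].
Definition verts_f (f : fac D) : {set vtx D} :=
  [set v | [exists e, v_in_e v e && e_in_f e f]].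
Definition verts_t (t : tet D) : {set vtx D} :=
  [set v | [exists e, v_in_e v e && e_in_t e t]].

(* Combinatorial content of "Gamma^* is the dual of a 3-colex":
   every edge of Gamma^* (dual to a face of Gamma, lying in two 3-cells of
   different colors) has exactly two vertices, of different colors;
   every 3-cell is a tetrahedron whose four vertices have distinct colors, i.e.
   its edges and faces correspond bijectively (via their vertex sets) to the
   2- and 3-element subsets of its vertex set, with edge/face incidence given
   by inclusion of vertex sets;
   every face of Gamma^* (dual to an edge of Gamma, having two endpoints) lies in
   exactly two tetrahedra; the complex is pure. *)
Definition is_colex_dual : Prop :=
  [/\ (forall e : edg D, #|verts_e e| = 2 /\
          {in verts_e e &, forall u v, u != v -> vcol u != vcol v}),
      (forall t : tet D,
          [/\ #|verts_t t| = 4,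
              {in verts_t t &, injective (@vcol D)},
              {in [pred e | e_in_t e t] &, injective verts_e} &
              [set verts_e e | e in [pred e | e_in_t e t]] =
                [set S in powerset (verts_t t) | #|S| == 2]]),
      (forall t : tet D,
          [/\ {in [pred f | f_in_t f t] &, injective verts_f},
              [set verts_f f | f in [pred f | f_in_t f t]] =
                [set S in powerset (verts_t t) | #|S| == 3] &
              (forall e f, f_in_t f t ->
                 e_in_f e f = e_in_t e t && (verts_e e \subset verts_f f))]),
      (forall f : fac D, #|[set t | f_in_t f t]| = 2) &
      ((forall e : edg D, exists f, e_in_f e f) /\
       (forall v : vtx D, exists e, v_in_e v e))].

(* c-faces / c-edges: no vertex of color c; these are the faces / edges
   of the minor complex Gamma^{* \ c}. *)
Definition is_cface (c : color) (f : fac D) : bool :=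
  [forall v, (v \in verts_f f) ==> (vcol v != c)].
Definition is_cedge (c : color) (e : edg D) : bool :=
  [forall v, (v \in verts_e e) ==> (vcol v != c)].

(* syndrome of the color-code X-error prod_{nu in Om} X_nu, at edge e *)
Definition cc_syndrome (Om : {set tet D}) (e : edg D) : bool :=
  odd #|[set t in Om | e_in_t e t]|.

Definition tc_syndrome (Fs : {set fac D}) (e : edg D) : bool :=
  odd #|[set f in Fs | e_in_f e f]|.

End Cells.

(* Every tetrahedron of the dual complex has exactly one vertex of color c, so its
   other three vertices span a c-face; and a c-edge lies in the
   tetrahedron iff it lies in that c-face.  Pushing the error forward along
   tetrahedron |-> its c-face and keeping the faces hit an odd number of times gives a
   face set whose toric syndrome on every c-edge has the parity of the color-code
   syndrome. *)
From HB Require Import structures.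
From mathcomp Require Import all_boot.

Set Implicit Arguments.
Unset Strict Implicit.
Unset Printing Implicit Defensive.

Lemma odd_sum (I : finType) (P : pred I) (F : I -> nat) :
  odd (\sum_(i | P i) F i) = odd #|[set i | P i & odd (F i)]|.
Proof.
rewrite -sum1dep_card big_mkcondr /=.
elim/big_rec2: _ => // i m n _ IH.
by rewrite oddD IH; case: (odd (F i)) => /=; rewrite ?oddS.
Qed.

Lemma odd_card_preim (T U : finType) (phi : T -> U) (A : {set T}) (P : pred U) :
  odd #|[set t in A | P (phi t)]| =
  odd #|[set u | P u & odd #|[set t in A | phi t == u]|]|.
Proof.
rewrite -sum1_card (partition_big phi P) => [|t]; last by rewrite inE => /andP[].
rewrite odd_sum; congr (odd #|pred_of_set _|); apply/setP => u; rewrite !inE.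
case Pu: (P u) => //=; rewrite sum1dep_card; congr (odd #|pred_of_set _|).
by apply/setP => t; rewrite !inE; case: eqP => [->|]; rewrite ?Pu ?andbT ?andbF.
Qed.

Lemma card_color : #|{: color}| = 4.
Proof.
rewrite -(card_imset _ (can_inj color_toK)) -[RHS](card_ord 4) -cardsT.
congr #|pred_of_set _|; apply/setP => i; rewrite !inE; apply/imsetP.
exists (ord_to_color i) => //; apply: val_inj.
by case: i => [[|[|[|[|i]]]] Hi] //=; rewrite inordK.
Qed.

Section TetrahedronCFace.

Variables (D : dual_complex) (c : color).
Hypothesis HD : is_colex_dual D.

Definition cverts (t : tet D) : {set vtx D} := [set v in verts_t t | vcol v != c].

Lemma exists_vcol_tet (t : tet D) : exists2 v, v \in verts_t t & vcol v = c.
Proof.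
case: HD => _ /(_ t)[card_t inj_t _ _] _ _ _.
have : c \in @vcol D @: verts_t t.
  suff -> : @vcol D @: verts_t t = [set: color] by rewrite inE.
  apply/eqP; rewrite eqEcard subsetT cardsT card_color.
  by rewrite card_in_imset // card_t.
by case/imsetP=> v vt ->; exists v.
Qed.

Lemma cverts_in_3subsets (t : tet D) :
  cverts t \in [set S in powerset (verts_t t) | #|S| == 3].
Proof.
case: HD => _ /(_ t)[card_t inj_t _ _] _ _ _.
have [vc vct vcolc] := exists_vcol_tet t.
have -> : cverts t = verts_t t :\ vc.
  apply/setP => v; rewrite in_setD1 [in LHS]inE -vcolc andbC.
  by case vt: (v \in verts_t t); rewrite ?andbF // !andbT (inj_in_eq inj_t).
rewrite inE powersetE subsetDl /=.
by move: (cardsD1 vc (verts_t t)); rewrite card_t vct add1n => -[->].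
Qed.

Lemma exists_tet_cface (t : tet D) : exists f, f_in_t f t && (verts_f f == cverts t).
Proof.
case: HD => _ _ /(_ t)[_ faces_t _] _ _.
have := cverts_in_3subsets t; rewrite -faces_t => /imsetP[f ft ->].
by exists f; rewrite eqxx andbT; move: ft; rewrite inE.
Qed.

Definition tet_cface (t : tet D) : fac D := xchoose (exists_tet_cface t).

Lemma tet_cfaceP (t : tet D) :
  f_in_t (tet_cface t) t /\ verts_f (tet_cface t) = cverts t.
Proof. by case/andP: (xchooseP (exists_tet_cface t)) => ft /eqP. Qed.

Lemma tet_cface_is_cface (t : tet D) : is_cface c (tet_cface t).
Proof.
have [_ vf] := tet_cfaceP t.
by apply/forallP => v; apply/implyP; rewrite vf inE => /andP[].
Qed.

Lemma cedge_in_tet_cface (t : tet D) (e : edg D) :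
  is_cedge c e -> e_in_f e (tet_cface t) = e_in_t e t.
Proof.
move=> /forallP ce; have [ft vf] := tet_cfaceP t.
case: HD => _ _ /(_ t)[_ _ ->] // _ _.
case et: (e_in_t e t) => //=; rewrite vf.
apply/subsetP => v ve; rewrite !inE (implyP (ce v)) // andbT.
by apply/existsP; exists e; move: ve; rewrite inE => ->.
Qed.

End TetrahedronCFace.

Theorem corollary2 (D : dual_complex) (HD : is_colex_dual D) (c : color)
    (Om : {set tet D}) :
  exists Fs : {set fac D},
    (forall f, f \in Fs -> is_cface c f) /\
    (forall e : edg D, is_cedge c e -> tc_syndrome Fs e = cc_syndrome Om e).
Proof.
pose fiber f := [set t in Om | tet_cface c HD t == f].
exists [set f | odd #|fiber f|]; split.
  move=> f; rewrite inE.
  case: (set_0Vmem (fiber f)) => [->|[t]]; first by rewrite cards0.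
  by rewrite inE => /andP[_ /eqP <-] _; apply: tet_cface_is_cface.
move=> e ce; rewrite /cc_syndrome.
have -> : [set t in Om | e_in_t e t] = [set t in Om | e_in_f e (tet_cface c HD t)].
  by apply/setP => t; rewrite !inE cedge_in_tet_cface.
rewrite (odd_card_preim _ _ (e_in_f e)) /tc_syndrome.
by congr (odd #|pred_of_set _|); apply/setP => f; rewrite !inE andbC.
Qed.
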